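(* Let $I$ be an interval in $\mathcal{R}$ with endpoints $a<b$, and let $X\subseteq I$ be dense in $I$ (with respect to the order topology). Then every cover $(S_n)$ of $X$ satisfies $\sum_{n=1}^\infty l(S_n)\ge l(I)$; consequently $X$ is outer measurable and $M_u(X)=l(I)=b-a$.
   Context: $\mathcal{R}$ denotes the Levi-Civita field: functions $x:\mathbb{Q}\to\mathbb{R}$ with left-finite support, with componentwise addition and formal power series multiplication, ordered by $x>0$ iff $x\ne0$ and $x[\min\operatorname{supp}x]>0$; it is a non-Archimedean ordered field extension of $\mathbb{R}$, Cauchy complete in the order topology, in which all limits and series are taken (a series $\sum a_n$ converges iff $a_n\to0$). An interval is a set $[a,b],[a,b),(a,b]$ or $(a,b)$ with $a<b$ in $\mathcal{R}$, of length $l=b-a$. A cover of $A\subseteq\mathcal{R}$ is a sequence of intervals $(S_n)_{n\ge1}$ with $A\subseteq\bigcup_n S_n$ and $\sum_n l(S_n)$ convergent in $\mathcal{R}$. $A$ is called outer measurable if the infimum $\inf\{\sum_n l(S_n): (S_n)\text{ a cover of }A\}$ exists in $\mathcal{R}$; this infimum is then called the outer measure $M_u(A)$. *)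

(* the Levi-Civita field modelled as functions rat -> R
   (R : realType, i.e. the real numbers) with left-finite support. *)
From mathcomp Require Import all_boot all_order all_algebra.
From mathcomp Require Import boolp classical_sets cardinality reals.
Set Implicit Arguments. Unset Strict Implicit. Unset Printing Implicit Defensive.
Import Order.TTheory GRing.Theory Num.Theory.
Local Open Scope classical_set_scope.
Local Open Scope ring_scope.

Section LeviCivita.
Variable R : realType.

Definition left_finite (x : rat -> R) : Prop :=
  forall r : rat, finite_set [set q : rat | q < r /\ x q != 0].
Definition LC : set (rat -> R) := [set x | left_finite x].

Definition lc_add (x y : rat -> R) : rat -> R := fun q => x q + y q.
Definition lc_opp (x : rat -> R) : rat -> R := fun q => - x q.
Definition lc_sub (x y : rat -> R) : rat -> R := lc_add x (lc_opp y).

Definition lc_pos (x : rat -> R) : Prop :=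
  exists q : rat, 0 < x q /\ forall p : rat, p < q -> x p = 0.
Definition lc_lt (x y : rat -> R) : Prop := lc_pos (lc_sub y x).
Definition lc_le (x y : rat -> R) : Prop := x = y \/ lc_lt x y.

Definition lc_open (U : set (rat -> R)) : Prop :=
  forall p, LC p -> U p -> exists c d, [/\ LC c, LC d, lc_lt c p, lc_lt p d &
    forall y, LC y -> lc_lt c y -> lc_lt y d -> U y].

Definition lc_cvg (s : nat -> rat -> R) (L : rat -> R) : Prop :=
  LC L /\ forall c d, LC c -> LC d -> lc_lt c L -> lc_lt L d ->
    exists N : nat, forall n, (N <= n)%N -> lc_lt c (s n) /\ lc_lt (s n) d.

Definition lc_psum (u : nat -> rat -> R) (n : nat) : rat -> R :=
  fun q => \sum_(k < n) u k q.
Definition lc_series_to (u : nat -> rat -> R) (L : rat -> R) : Prop :=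
  lc_cvg (lc_psum u) L.

Record lc_interval := Itv { ia : rat -> R; ib : rat -> R;
                         iclosedl : bool; iclosedr : bool }.
Definition is_interval (I : lc_interval) : Prop :=
  [/\ LC (ia I), LC (ib I) & lc_lt (ia I) (ib I)].
Definition in_itv (I : lc_interval) (p : rat -> R) : Prop :=
  [/\ LC p,
      (if iclosedl I then lc_le (ia I) p else lc_lt (ia I) p) &
      (if iclosedr I then lc_le p (ib I) else lc_lt p (ib I))].
Definition itv_length (I : lc_interval) : rat -> R := lc_sub (ib I) (ia I).

Definition lc_dense_in (X : set (rat -> R)) (I : lc_interval) : Prop :=
  (forall x, X x -> in_itv I x) /\
  forall U, lc_open U -> (exists p, in_itv I p /\ U p) -> exists p, X p /\ U p.

Definition is_cover (A : set (rat -> R)) (S : nat -> lc_interval) : Prop :=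
  [/\ forall n, is_interval (S n),
      forall x, A x -> exists n, in_itv (S n) x &
      exists L, lc_series_to (fun n => itv_length (S n)) L].

Definition cover_sums (A : set (rat -> R)) : set (rat -> R) :=
  [set L | exists S, is_cover A S /\ lc_series_to (fun n => itv_length (S n)) L].

Definition lc_is_inf (B : set (rat -> R)) (m : rat -> R) : Prop :=
  [/\ LC m, forall y, B y -> lc_le m y &
      forall m', LC m' -> (forall y, B y -> lc_le m' y) -> lc_le m' m].

Definition outer_measurable (A : set (rat -> R)) : Prop :=
  exists m, lc_is_inf (cover_sums A) m.
Definition outer_measure_is (A : set (rat -> R)) (m : rat -> R) : Prop :=
  lc_is_inf (cover_sums A) m.

End LeviCivita.

(* Suppose a cover of X had sum L < l(I), and let g_k d^k be the leading term of g := l(I) - L,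
   d being the positive infinitesimal with d[1] = 1.  All but finitely many intervals of the cover,
   say all but the first N, are shorter than d^(k+1), and the first N have total length at most L.
   Splitting the budget g at each of them shows that they miss an open interval (y, z) inside I with
   z - y > rho d^k for some real rho > 0.  For each real r in (0, rho), density gives a point of X
   within d^(k+1) of y + r d^k, which lies in one of the short intervals; points obtained from
   distinct r are more than d^(k+1) apart, so this defines an injection of the real interval
   (0, rho) into nat, which is impossible.
   Conversely, I followed by the intervals [a, a + d^(v+n) - d^(v+n+1)], n >= 1, is a cover with
   sum l(I) + d^(v+1), which lies below any m > l(I) once v is the leading exponent of m - l(I). *)

From Pilot Require Import Defs.
From mathcomp Require Import all_boot all_order all_algebra.
From mathcomp Require Import boolp classical_sets cardinality reals.
From mathcomp Require Import ring lra.
From mathcomp Require Import ereal measure lebesgue_measure.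
Set Implicit Arguments. Unset Strict Implicit. Unset Printing Implicit Defensive.
Import Order.TTheory GRing.Theory Num.Theory.
Local Open Scope classical_set_scope.
Local Open Scope ring_scope.

(* Order facts are proved by writing the goal as a sum of terms known to be positive or
   nonnegative; [lc_ring] checks the underlying pointwise identity. *)
Ltac lc_ring := let q := fresh "q" in
  move=> q; rewrite /=; unfold itv_length, lc_sub, lc_add, lc_opp; ring.

Section PositiveCone.
Variable R : realType.
Implicit Types x y z : rat -> R.

Definition lc_nonneg x := (forall q, x q = 0) \/ lc_pos x.

Lemma lc_pos_eq x y : x =1 y -> lc_pos x -> lc_pos y.
Proof. by move=> e [q [xq xp]]; exists q; rewrite -e; split=> // p /xp; rewrite -e. Qed.

Lemma lc_nonneg_eq x y : x =1 y -> lc_nonneg x -> lc_nonneg y.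
Proof.
move=> e [x0|xp]; first by left=> q; rewrite -e.
by right; apply: lc_pos_eq xp.
Qed.

Lemma lc_pos_nonneg x : lc_pos x -> lc_nonneg x. Proof. by right. Qed.

Lemma not_lc_pos0 x : (forall q, x q = 0) -> ~ lc_pos x.
Proof. by move=> x0 [q [xq _]]; move: xq; rewrite x0 ltxx. Qed.

Lemma lc_posD x y : lc_pos x -> lc_pos y -> lc_pos (fun q => x q + y q).
Proof.
move=> [q1 [x1 xp]] [q2 [y2 yp]].
case: (ltgtP q1 q2) y2 yp => [lt12|lt21|<-] y2 yp.
- exists q1; split; first by rewrite (yp _ lt12) addr0.
  by move=> p hp; rewrite xp // yp ?addr0 // (lt_trans hp lt12).
- exists q2; split; first by rewrite (xp _ lt21) add0r.
  by move=> p hp; rewrite yp // xp ?addr0 // (lt_trans hp lt21).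
- exists q1; split; first by rewrite addr_gt0.
  by move=> p hp; rewrite xp // yp ?addr0.
Qed.

Lemma lc_pos_nonnegD x y : lc_pos x -> lc_nonneg y -> lc_pos (fun q => x q + y q).
Proof.
move=> xp [y0|yp]; last exact: lc_posD.
by apply: lc_pos_eq xp => q; rewrite y0 addr0.
Qed.

Lemma lc_nonnegD x y : lc_nonneg x -> lc_nonneg y -> lc_nonneg (fun q => x q + y q).
Proof.
move=> [x0|xp] yn; last by right; exact: lc_pos_nonnegD.
by apply: lc_nonneg_eq yn => q; rewrite x0 add0r.
Qed.

Lemma lc_posZ c x : 0 < c -> lc_pos x -> lc_pos (fun q => c * x q).
Proof.
move=> c0 [q [xq xp]]; exists q; split; first by rewrite mulr_gt0.
by move=> p /xp ->; rewrite mulr0.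
Qed.

Lemma lc_nonnegZ c x : 0 <= c -> lc_nonneg x -> lc_nonneg (fun q => c * x q).
Proof.
rewrite le_eqVlt => /orP[/eqP<- _|c0 [x0|xp]]; first by left=> q; rewrite mul0r.
  by left=> q; rewrite x0 mulr0.
by right; exact: lc_posZ.
Qed.

Lemma lc_nonneg_sum N (F : nat -> rat -> R) :
  (forall n, lc_nonneg (F n)) -> lc_nonneg (fun q => \sum_(n < N) F n q).
Proof.
move=> Fn; elim: N => [|N IH]; first by left=> q; rewrite big_ord0.
by apply: lc_nonneg_eq (lc_nonnegD IH (Fn N)) => q; rewrite big_ord_recr.
Qed.

End PositiveCone.

Section LeftFinite.
Variable R : realType.
Implicit Types x y z : rat -> R.

Lemma LC_lead_exp x q0 : LC x -> x q0 != 0 ->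
  exists q, x q != 0 /\ forall p, p < q -> x p = 0.
Proof.
move=> lx xq0.
have [s defs] := (finite_seqP _).1 (lx (q0 + 1)).
have in_s p : p < q0 + 1 -> x p != 0 -> p \in s.
  by move=> ? ?; have : [set` s] p by rewrite -defs.
pose m := \big[Order.min/q0]_(p <- s) p.
have [m_lt xm] : m < q0 + 1 /\ x m != 0.
  rewrite /m big_seq; apply: (big_ind (fun p => p < q0 + 1 /\ x p != 0)) => [|a b ha hb|p ps].
  - by rewrite ltrDl.
  - by rewrite /Order.min; case: ifP.
  - by have : [set` s] p := ps; rewrite -defs.
exists m; split=> // p pm; apply/eqP; apply: contraTT (pm) => xp.
have := ge_bigmin_seq q0 p predT id (in_s _ (lt_trans pm m_lt) xp) isT.
by rewrite leNgt pm.
Qed.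

Lemma LC_support x y : LC x -> (forall q, y q != 0 -> x q != 0) -> LC y.
Proof.
by move=> lx yx r; apply: sub_finite_set (lx r) => q [qr yq]; split=> //; exact: yx.
Qed.

Lemma LC0 : LC (fun _ => 0 : R).
Proof. by move=> r; apply: sub_finite_set (finite_set0 _) => q [_]; rewrite eqxx. Qed.

Lemma LC_add x y : LC x -> LC y -> LC (fun q => x q + y q).
Proof.
move=> lx ly r.
have fU : finite_set ([set q | q < r /\ x q != 0] `|` [set q | q < r /\ y q != 0]).
  by rewrite finite_setU; split; [exact: lx|exact: ly].
apply: sub_finite_set fU => q [qr].
by case: (eqVneq (x q) 0) => [->|]; [rewrite add0r; right|left].
Qed.

Lemma LC_scale c x : LC x -> LC (fun q => c * x q).
Proof. by move/LC_support; apply=> q; apply: contra => /eqP->; rewrite mulr0. Qed.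

Lemma LC_opp x : LC x -> LC (fun q => - x q).
Proof. by move/(LC_scale (-1))/LC_support; apply=> q; rewrite mulN1r. Qed.

Lemma LC_sub x y : LC x -> LC y -> LC (fun q => x q - y q).
Proof. by move=> lx /LC_opp; apply: LC_add. Qed.

Lemma LC_sum N (F : nat -> rat -> R) :
  (forall n, LC (F n)) -> LC (fun q => \sum_(n < N) F n q).
Proof.
move=> lF; elim: N => [|N IH].
  by apply: (LC_support LC0) => q; rewrite big_ord0.
by apply: (LC_support (LC_add IH (lF N))) => q; rewrite big_ord_recr.
Qed.

Lemma lc_nonneg_or_neg x : LC x -> lc_nonneg x \/ lc_pos (fun q => - x q).
Proof.
move=> lx; have [[q0 xq0]|x0] := pselect (exists q, x q != 0); last first.
  by left; left=> q; apply/eqP; apply: contra_notT x0 => ?; exists q.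
have [q [xq xp]] := LC_lead_exp lx xq0.
case: (ltgtP (x q) 0) => [xq_neg|xq_pos|xq0']; last by rewrite xq0' eqxx in xq.
- by right; exists q; split; [rewrite oppr_gt0|move=> p /xp ->; rewrite oppr0].
- by left; right; exists q.
Qed.

Lemma lc_le_or_gt x y : LC x -> LC y ->
  lc_nonneg (fun q => y q - x q) \/ lc_pos (fun q => x q - y q).
Proof.
move=> lx ly; case: (lc_nonneg_or_neg (LC_sub ly lx)) => [|h]; first by left.
by right; apply: lc_pos_eq h => q; rewrite opprB.
Qed.

Lemma lc_le_nonneg x y : lc_le x y -> lc_nonneg (fun q => y q - x q).
Proof. by case=> [->|]; [left=> q; rewrite subrr|right]. Qed.

Lemma lc_nonneg_le x y : lc_nonneg (fun q => y q - x q) -> lc_le x y.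
Proof.
case=> [yx|]; [left|by right].
by apply: funext => q; apply/eqP; rewrite eq_sym -subr_eq0 yx.
Qed.

End LeftFinite.

Section LatticeAndMonomials.
Variable R : realType.
Implicit Types x y z : rat -> R.

Definition lc_max x y := if `[< lc_lt x y >] then y else x.
Definition lc_min x y := if `[< lc_lt x y >] then x else y.

Lemma LC_max x y : LC x -> LC y -> LC (lc_max x y).
Proof. by rewrite /lc_max; case: asboolP. Qed.

Lemma LC_min x y : LC x -> LC y -> LC (lc_min x y).
Proof. by rewrite /lc_min; case: asboolP. Qed.

Lemma lc_maxP x y : LC x -> LC y ->
  lc_nonneg (fun q => lc_max x y q - x q) /\ lc_nonneg (fun q => lc_max x y q - y q).
Proof.
move=> lx ly; rewrite /lc_max; case: asboolP => [xy|yx].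
  by split; [right|left=> q; rewrite subrr].
split; first by left=> q; rewrite subrr.
by case: (lc_le_or_gt ly lx) => // /yx.
Qed.

Lemma lc_minP x y : LC x -> LC y ->
  lc_nonneg (fun q => x q - lc_min x y q) /\ lc_nonneg (fun q => y q - lc_min x y q).
Proof.
move=> lx ly; rewrite /lc_min; case: asboolP => [xy|yx].
  by split; [left=> q; rewrite subrr|right].
split; last by left=> q; rewrite subrr.
by case: (lc_le_or_gt ly lx) => // /yx.
Qed.

Lemma lc_max_le x y z : lc_nonneg (fun q => z q - x q) -> lc_nonneg (fun q => z q - y q) ->
  lc_nonneg (fun q => z q - lc_max x y q).
Proof. by rewrite /lc_max; case: asboolP. Qed.

Lemma lc_le_min x y z : lc_nonneg (fun q => x q - z q) -> lc_nonneg (fun q => y q - z q) ->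
  lc_nonneg (fun q => lc_min x y q - z q).
Proof. by rewrite /lc_min; case: asboolP. Qed.

(* [monom k c] is the monomial c d^k. *)
Definition monom (k : rat) (c : R) : rat -> R := fun q => if q == k then c else 0.

Lemma monom_id k c : monom k c k = c.
Proof. by rewrite /monom eqxx. Qed.

Lemma monom_neq k c p : p != k -> monom k c p = 0.
Proof. by rewrite /monom => /negbTE ->. Qed.

Lemma monom_lt k c p : p < k -> monom k c p = 0.
Proof. by move=> pk; rewrite monom_neq // lt_eqF. Qed.

Lemma monomB k (a b : R) q : monom k a q - monom k b q = monom k (a - b) q.
Proof. by rewrite /monom; case: (q == k); rewrite ?subr0. Qed.

Lemma monomZ k (a b : R) q : a * monom k b q = monom k (a * b) q.
Proof. by rewrite /monom; case: (q == k); rewrite ?mulr0. Qed.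

Lemma LC_monom k c : LC (monom k c).
Proof.
move=> r; apply: (sub_finite_set _ (finite_set1 k)) => q [_].
by rewrite /monom; case: ifP => [/eqP ->|_] //; rewrite eqxx.
Qed.

Lemma lc_pos_monom k c : 0 < c -> lc_pos (monom k c).
Proof. by move=> c0; exists k; rewrite monom_id; split=> // p /monom_lt. Qed.

Lemma lc_pos_sub_monom x w e c : (forall p, p < w -> x p = 0) -> 0 < x w -> w < e ->
  lc_pos (fun q => x q - monom e c q).
Proof.
move=> xw0 xw we; exists w; rewrite monom_lt // subr0; split=> // p pw.
by rewrite xw0 // monom_lt ?subr0 // (lt_trans pw we).
Qed.

Lemma lc_pos_monom_sub k e c c' : k < e -> 0 < c ->
  lc_pos (fun q => monom k c q - monom e c' q).
Proof. by move=> ke c0; apply: lc_pos_sub_monom ke => [p /monom_lt|]; rewrite ?monom_id. Qed.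

Lemma lc_pos_sub_half_lead x k : (forall p, p < k -> x p = 0) -> 0 < x k ->
  lc_pos (fun q => x q - monom k (x k / 2) q).
Proof.
move=> xk0 xk; exists k; rewrite monom_id; split; first lra.
by move=> p pk; rewrite xk0 // monom_lt // subr0.
Qed.

End LatticeAndMonomials.

Section FreeGap.
Variable R : realType.
Implicit Types a b s t x y z lo hi g : rat -> R.
Implicit Types u v : nat -> rat -> R.

Definition seg_length a b : rat -> R := lc_max (fun q => b q - a q) (fun _ => 0).

Lemma LC_seg_length a b : LC a -> LC b -> LC (seg_length a b).
Proof. by move=> la lb; apply: LC_max; [exact: LC_sub|exact: LC0]. Qed.

Lemma seg_lengthP a b : LC a -> LC b ->
  (lc_nonneg (fun q => b q - a q) /\ seg_length a b =1 (fun q => b q - a q)) \/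
  (lc_pos (fun q => a q - b q) /\ seg_length a b =1 (fun _ => 0)).
Proof.
move=> la lb; rewrite /seg_length /lc_max; case: asboolP => [ba|ab].
  by right; split=> //; apply: lc_pos_eq ba; lc_ring.
left; split=> //; case: (lc_nonneg_or_neg (LC_sub lb la)) => // ab'.
by case: ab; apply: lc_pos_eq ab'; lc_ring.
Qed.

Lemma seg_length_nonneg a b : LC a -> LC b -> lc_nonneg (seg_length a b).
Proof.
move=> la lb; case: (seg_lengthP la lb) => [[ba e]|[_ e]]; last by left.
by apply: lc_nonneg_eq ba => q; rewrite e.
Qed.

Lemma seg_length_ge a b : LC a -> LC b ->
  lc_nonneg (fun q => seg_length a b q - (b q - a q)).
Proof.
move=> la lb; case: (seg_lengthP la lb) => [[_ e]|[ab e]].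
  by left=> q; rewrite e subrr.
by right; apply: lc_pos_eq ab => q; rewrite e; ring.
Qed.

Lemma seg_length_split a b s t : LC a -> LC b -> LC s -> LC t ->
  lc_nonneg (fun q => t q - s q) ->
  lc_nonneg (fun q => seg_length a b q - seg_length a (lc_min b s) q
                      - seg_length (lc_max a t) b q).
Proof.
move=> la lb ls lt st.
have lm := LC_min lb ls; have lM := LC_max la lt.
have [bm sm] := lc_minP lb ls; have [Ma Mt] := lc_maxP la lt.
case: (seg_lengthP la lb) => [[ba e]|[ab e]];
case: (seg_lengthP la lm) => [[ma eA]|[_ eA]];
case: (seg_lengthP lM lb) => [[bM eB]|[_ eB]].
- by apply: lc_nonneg_eq (lc_nonnegD (lc_nonnegD Mt st) sm) => q; rewrite e eA eB; ring.
- by apply: lc_nonneg_eq bm => q; rewrite e eA eB; ring.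
- by apply: lc_nonneg_eq Ma => q; rewrite e eA eB; ring.
- by apply: lc_nonneg_eq ba => q; rewrite e eA eB; ring.
- by case: (not_lc_pos0 _ (lc_pos_nonnegD (lc_pos_nonnegD ab bm) ma)); lc_ring.
- by case: (not_lc_pos0 _ (lc_pos_nonnegD (lc_pos_nonnegD ab bm) ma)); lc_ring.
- by case: (not_lc_pos0 _ (lc_pos_nonnegD (lc_pos_nonnegD ab Ma) bM)); lc_ring.
- by left=> q; rewrite e eA eB; ring.
Qed.

Definition misses_segments N u v y z := forall n x, (n < N)%N ->
  lc_pos (fun q => x q - y q) -> lc_pos (fun q => z q - x q) ->
  lc_nonneg (fun q => x q - u n q) -> lc_nonneg (fun q => v n q - x q) -> False.

Definition has_free_gap N u v lo hi g := exists y z,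
  [/\ LC y, lc_nonneg (fun q => y q - lo q), lc_nonneg (fun q => hi q - z q),
      misses_segments N u v y z &
      exists2 c : R, 0 < c & lc_nonneg (fun q => c * (z q - y q) - g q)].

Lemma has_free_gap_transfer N N' u v u' v' lo hi lo' hi' g g' (c' : R) :
  has_free_gap N' u' v' lo' hi' g' ->
  lc_nonneg (fun q => lo' q - lo q) -> lc_nonneg (fun q => hi q - hi' q) ->
  0 < c' -> lc_nonneg (fun q => c' * g' q - g q) ->
  (forall n x, (n < N)%N ->
     lc_pos (fun q => x q - lo' q) -> lc_pos (fun q => hi' q - x q) ->
     lc_nonneg (fun q => x q - u n q) -> lc_nonneg (fun q => v n q - x q) ->
     [/\ (n < N')%N, lc_nonneg (fun q => x q - u' n q) & lc_nonneg (fun q => v' n q - x q)]) ->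
  has_free_gap N u v lo hi g.
Proof.
move=> [y [z [ly ylo zhi miss [c c0 cg]]]] lolo hihi c'0 gg transfer.
exists y, z; split=> //.
- by apply: lc_nonneg_eq (lc_nonnegD ylo lolo); lc_ring.
- by apply: lc_nonneg_eq (lc_nonnegD zhi hihi); lc_ring.
- move=> n x nN xy zx ux xv.
  have [||nN' ux' xv'] := transfer n x nN _ _ ux xv.
  + by apply: lc_pos_eq (lc_pos_nonnegD xy ylo); lc_ring.
  + by apply: lc_pos_eq (lc_pos_nonnegD zx zhi); lc_ring.
  exact: miss nN' xy zx ux' xv'.
exists (c' * c); first exact: mulr_gt0.
by apply: lc_nonneg_eq (lc_nonnegD (lc_nonnegZ (ltW c'0) cg) gg); lc_ring.
Qed.

Lemma lc_larger_half a b g : lc_pos g -> lc_nonneg (fun q => a q + b q - g q) ->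
  lc_nonneg (fun q => a q - b q) -> lc_pos a /\ lc_nonneg (fun q => 2 * a q - g q).
Proof.
move=> gp abg ab; split; last by apply: lc_nonneg_eq (lc_nonnegD abg ab); lc_ring.
have half_gt0 : (0 : R) < 2^-1 by rewrite invr_gt0 ltr0n.
by apply: lc_pos_eq (lc_posZ half_gt0 (lc_pos_nonnegD (lc_pos_nonnegD gp abg) ab)) => q /=; lra.
Qed.

Lemma seg_length_sum_split N u v s t :
  (forall n, LC (u n) /\ LC (v n)) -> LC s -> LC t -> lc_nonneg (fun q => t q - s q) ->
  lc_nonneg (fun q => \sum_(n < N) seg_length (u n) (v n) q
    - \sum_(n < N) seg_length (u n) (lc_min (v n) s) q
    - \sum_(n < N) seg_length (lc_max (u n) t) (v n) q).
Proof.
move=> luv ls lt st.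
apply: lc_nonneg_eq (lc_nonneg_sum N (fun n => seg_length_split (luv n).1 (luv n).2 ls lt st)).
by move=> q; rewrite !sumrB.
Qed.

Lemma free_gap_budget_split N u v lo hi g s t :
  (forall n, LC (u n) /\ LC (v n)) -> LC s -> LC t -> lc_nonneg (fun q => t q - s q) ->
  lc_nonneg (fun q => s q - u N q) -> lc_nonneg (fun q => v N q - t q) ->
  lc_nonneg (fun q => hi q - lo q - g q - \sum_(n < N.+1) seg_length (u n) (v n) q) ->
  lc_nonneg (fun q => (s q - lo q - \sum_(n < N) seg_length (u n) (lc_min (v n) s) q)
    + (hi q - t q - \sum_(n < N) seg_length (lc_max (u n) t) (v n) q) - g q).
Proof.
move=> luv ls lt st su vt budget; have [luN lvN] := luv N.
have cut := seg_length_sum_split N luv ls lt st.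
apply: lc_nonneg_eq (lc_nonnegD (lc_nonnegD (lc_nonnegD (lc_nonnegD budget
  (seg_length_ge luN lvN)) vt) su) cut).
by move=> q; rewrite big_ord_recr /=; ring.
Qed.

Lemma has_free_gap_skip N u v lo hi g : has_free_gap N u v lo hi g ->
  lc_pos (fun q => u N q - v N q) \/ lc_pos (fun q => lo q - v N q) \/
  lc_pos (fun q => u N q - hi q) ->
  has_free_gap N.+1 u v lo hi g.
Proof.
move=> gap out.
apply: (has_free_gap_transfer (c' := 1) gap); try by left=> q; rewrite ?mul1r subrr.
  exact: ltr01.
move=> n x; rewrite ltnS leq_eqVlt => /orP[/eqP-> xlo hix ux xv|nN _ _ ux xv]; last by split.
exfalso; case: out => [ba|[blo|ahi]].
- by apply: (not_lc_pos0 _ (lc_pos_nonnegD (lc_pos_nonnegD ba ux) xv)); lc_ring.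
- by apply: (not_lc_pos0 _ (lc_pos_nonnegD (lc_posD blo xlo) xv)); lc_ring.
- by apply: (not_lc_pos0 _ (lc_pos_nonnegD (lc_posD ahi hix) ux)); lc_ring.
Qed.

Lemma has_free_gap_left N u v lo hi g gA :
  has_free_gap N u (fun n => lc_min (v n) (lc_max (u N) lo)) lo (lc_max (u N) lo) gA ->
  lc_nonneg (fun q => hi q - lc_max (u N) lo q) ->
  lc_nonneg (fun q => 2 * gA q - g q) -> has_free_gap N.+1 u v lo hi g.
Proof.
move=> gap shi gg; have two_gt0 : (0 : R) < 2 by rewrite ltr0n.
apply: (has_free_gap_transfer gap _ shi two_gt0 gg); first by left=> q; rewrite subrr.
move=> n x; rewrite ltnS leq_eqVlt => /orP[/eqP-> xlo sx ux _|nN _ sx ux xv].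
  exfalso; apply: (not_lc_pos0 _ (lc_pos_nonnegD sx (lc_max_le ux (lc_pos_nonneg xlo)))).
  lc_ring.
by split=> //=; apply: lc_le_min xv (lc_pos_nonneg sx).
Qed.

Lemma has_free_gap_right N u v lo hi g gB :
  has_free_gap N (fun n => lc_max (u n) (lc_min (v N) hi)) v (lc_min (v N) hi) hi gB ->
  lc_nonneg (fun q => lc_min (v N) hi q - lo q) ->
  lc_nonneg (fun q => 2 * gB q - g q) -> has_free_gap N.+1 u v lo hi g.
Proof.
move=> gap lot gg; have two_gt0 : (0 : R) < 2 by rewrite ltr0n.
apply: (has_free_gap_transfer gap lot _ two_gt0 gg); first by left=> q; rewrite subrr.
move=> n x; rewrite ltnS leq_eqVlt => /orP[/eqP-> tx xhi _ xv|nN tx _ ux xv].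
  exfalso; apply: (not_lc_pos0 _ (lc_pos_nonnegD tx (lc_le_min xv (lc_pos_nonneg xhi)))).
  lc_ring.
by split=> //=; apply: lc_max_le ux (lc_pos_nonneg tx).
Qed.

Lemma free_gap_exists N : forall u v lo hi g,
  (forall n, LC (u n) /\ LC (v n)) -> LC lo -> LC hi -> lc_pos g ->
  lc_nonneg (fun q => hi q - lo q - g q - \sum_(n < N) seg_length (u n) (v n) q) ->
  has_free_gap N u v lo hi g.
Proof.
elim: N => [|N IH] u v lo hi g luv llo lhi gpos budget.
  exists lo, hi; split=> //; try by left=> q; rewrite subrr.
  exists 1; first exact: ltr01.
  by apply: lc_nonneg_eq budget => q; rewrite big_ord0 mul1r; ring.
have [luN lvN] := luv N.
have hilo : lc_nonneg (fun q => hi q - lo q).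
  have sum_nonneg := lc_nonneg_sum N.+1 (fun n => seg_length_nonneg (luv n).1 (luv n).2).
  apply: lc_nonneg_eq (lc_nonnegD (lc_nonnegD budget (lc_pos_nonneg gpos)) sum_nonneg).
  lc_ring.
have budget_rest : lc_nonneg (fun q => hi q - lo q - g q
    - \sum_(n < N) seg_length (u n) (v n) q).
  apply: lc_nonneg_eq (lc_nonnegD budget (seg_length_nonneg luN lvN)).
  by move=> q; rewrite big_ord_recr /=; ring.
have skip := has_free_gap_skip (IH u v lo hi g luv llo lhi gpos budget_rest).
have [vu|uv] := lc_le_or_gt luN lvN; last exact: skip (or_introl uv).
have [vlo|lov] := lc_le_or_gt llo lvN; last exact: skip (or_intror (or_introl lov)).
have [hiu|uhi] := lc_le_or_gt luN lhi; last exact: skip (or_intror (or_intror uhi)).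
set s := lc_max (u N) lo; set t := lc_min (v N) hi.
have ls : LC s := LC_max luN llo; have lt : LC t := LC_min lvN lhi.
have st : lc_nonneg (fun q => t q - s q) by apply: lc_max_le; apply: lc_le_min.
have luvA n : LC (u n) /\ LC (lc_min (v n) s).
  by split; [exact: (luv n).1|exact: LC_min (luv n).2 ls].
have luvB n : LC (lc_max (u n) t) /\ LC (v n).
  by split; [exact: LC_max (luv n).1 lt|exact: (luv n).2].
pose gA q := s q - lo q - \sum_(n < N) seg_length (u n) (lc_min (v n) s) q.
pose gB q := hi q - t q - \sum_(n < N) seg_length (lc_max (u n) t) (v n) q.
have lgA : LC gA.
  exact: LC_sub (LC_sub ls llo) (LC_sum _ (fun n => LC_seg_length (luvA n).1 (luvA n).2)).
have lgB : LC gB.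
  exact: LC_sub (LC_sub lhi lt) (LC_sum _ (fun n => LC_seg_length (luvB n).1 (luvB n).2)).
have gAB : lc_nonneg (fun q => gA q + gB q - g q).
  apply: free_gap_budget_split => //.
    exact: (lc_maxP luN llo).1.
  exact: (lc_minP lvN lhi).1.
have [BA|AB] := lc_le_or_gt lgB lgA.
  have [gA_pos gAg] := lc_larger_half gpos gAB BA.
  apply: has_free_gap_left (IH _ _ _ _ _ luvA llo ls gA_pos _) _ gAg.
    by left=> q; rewrite /gA; ring.
  exact: lc_max_le hiu hilo.
have gBA : lc_nonneg (fun q => gB q + gA q - g q) by apply: lc_nonneg_eq gAB; lc_ring.
have [gB_pos gBg] := lc_larger_half gpos gBA (lc_pos_nonneg AB).
apply: has_free_gap_right (IH _ _ _ _ _ luvB lt lhi gB_pos _) _ gBg.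
  by left=> q; rewrite /gB; ring.
exact: lc_le_min vlo hilo.
Qed.

End FreeGap.

Section Series.
Variable R : realType.
Implicit Types u : nat -> rat -> R.

Lemma lc_psumS u n q : lc_psum u n.+1 q = lc_psum u n q + u n q.
Proof. by rewrite /lc_psum big_ord_recr. Qed.

Lemma lc_psum_mono u n m : (forall k, lc_nonneg (u k)) -> (n <= m)%N ->
  lc_nonneg (fun q => lc_psum u m q - lc_psum u n q).
Proof.
move=> un; elim: m => [|m IH]; first by rewrite leqn0 => /eqP->; left=> q; rewrite subrr.
rewrite leq_eqVlt => /orP[/eqP->|]; first by left=> q; rewrite subrr.
by rewrite ltnS => /IH nm; apply: lc_nonneg_eq (lc_nonnegD nm (un m)) => q; rewrite lc_psumS; ring.
Qed.

Lemma lc_series_terms_small u L k : lc_series_to u L -> (forall n, LC (u n)) ->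
  exists N0, forall n, (N0 <= n)%N -> lc_pos (fun q => monom k 1 q - u n q).
Proof.
move=> [lL cvg] lu; have half_gt0 : (0 : R) < 2^-1 by rewrite invr_gt0 ltr0n.
have half := lc_pos_monom k half_gt0.
have [||N0 near] := cvg _ _ (LC_sub lL (LC_monom k 2^-1)) (LC_add lL (LC_monom k 2^-1)).
- by apply: lc_pos_eq half; lc_ring.
- by apply: lc_pos_eq half; lc_ring.
exists N0 => n nN; have [above _] := near n nN; have [_ below] := near n.+1 (leqW nN).
apply: lc_pos_eq (lc_posD above below) => q.
by rewrite /lc_sub /lc_add /lc_opp /= lc_psumS /monom; case: (q == k); lra.
Qed.

Lemma lc_psum_le_lim u L N : lc_series_to u L -> (forall n, LC (u n)) ->
  (forall n, lc_nonneg (u n)) -> lc_nonneg (fun q => L q - lc_psum u N q).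
Proof.
move=> [lL cvg] lu un; have lS : LC (lc_psum u N) := LC_sum N lu.
case: (lc_le_or_gt lS lL) => // SL; exfalso.
have [||N1 near] := cvg _ (lc_psum u N) (LC_sub lL (LC_monom 0 1)) lS => //.
  by apply: lc_pos_eq (lc_pos_monom 0 ltr01); lc_ring.
have [_ below] := near (maxn N1 N) (leq_maxl _ _).
have mono := lc_psum_mono un (leq_maxr N1 N).
by apply: (not_lc_pos0 _ (lc_pos_nonnegD below mono)); lc_ring.
Qed.

Lemma lc_cvg_sub_monom (s : nat -> rat -> R) L v : LC L ->
  (forall n, (0 < n)%N -> s n =1 (fun q => L q - monom (v + n%:R) 1 q)) -> lc_cvg s L.
Proof.
move=> lL sE; split=> // c d lc ld [w [cw c_lead]] Ld.
exists (Num.bound `|w - v|).+1 => n nN; have n_gt0 : (0 < n)%N by apply: leq_trans nN.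
have wn : w < v + n%:R.
  have := archi_boundP (normr_ge0 (w - v)); have := ler_norm (w - v).
  have : ((Num.bound `|w - v|)%:R : rat) <= n%:R by rewrite ler_nat ltnW.
  lra.
split.
  apply: lc_pos_eq (lc_pos_sub_monom 1 c_lead cw wn) => q.
  by rewrite /lc_sub /lc_add /lc_opp /= sE //; ring.
apply: lc_pos_eq (lc_posD Ld (lc_pos_monom (v + n%:R) (ltr01 : (0 : R) < 1))) => q.
by rewrite /lc_sub /lc_add /lc_opp /= sE //; ring.
Qed.

End Series.

Lemma no_nat_injection_on_itv (R : realType) (rho : R) (f : R -> nat) :
  0 < rho -> {in [set x : R | 0 < x < rho] &, injective f} -> False.
Proof.
move=> rho0 finj.
have cA : countable [set` `]0, rho[%R].
  apply/countable_injP; exists f => x y xA yA; apply: finj; rewrite in_setE /=;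
  by move: xA yA; rewrite !in_setE /= !in_itv /=.
have := countable_lebesgue_measure0 cA.
rewrite lebesgue_measure_itv /=.
by rewrite lte_fin rho0 oppr0 adde0 => -[] /eqP; rewrite gt_eqF.
Qed.

Section DenseGap.
Variable R : realType.
Implicit Types x y z : rat -> R.

Lemma in_itv_bounds (J : lc_interval R) x : Defs.in_itv J x ->
  lc_nonneg (fun q => x q - ia J q) /\ lc_nonneg (fun q => ib J q - x q).
Proof.
case=> _ aJx xbJ; split.
  by move: aJx; case: (iclosedl J) => [/lc_le_nonneg|/lc_pos_nonneg].
by move: xbJ; case: (iclosedr J) => [/lc_le_nonneg|/lc_pos_nonneg].
Qed.

Lemma in_itv_strict (J : lc_interval R) x :
  LC x -> lc_lt (ia J) x -> lc_lt x (ib J) -> Defs.in_itv J x.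
Proof. by move=> lx ax xb; split=> //; [case: (iclosedl J)|case: (iclosedr J)] => //; right. Qed.

Lemma dense_meets_between (I : lc_interval R) X c d p : lc_dense_in X I ->
  LC c -> LC d -> Defs.in_itv I p -> lc_lt c p -> lc_lt p d ->
  exists x, [/\ X x, lc_lt c x & lc_lt x d].
Proof.
move=> [_ dense] lc ld Ip cp pd.
have [||x [Xx [_ cx xd]]] := dense [set x | [/\ LC x, lc_lt c x & lc_lt x d]].
- by move=> x _ [lx cx xd]; exists c, d; split=> // y ly cy yd.
- by exists p; split=> //; split=> //; case: Ip.
by exists x.
Qed.

Lemma seg_length_itv (J : lc_interval R) : is_interval J ->
  seg_length (ia J) (ib J) =1 itv_length J.
Proof.
case=> la lb ab q; case: (seg_lengthP la lb) => [[_ ->] //|[ba _]].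
by case: (not_lc_pos0 _ (lc_posD ab ba)); lc_ring.
Qed.

Lemma lc_pos_sub_lead_monom x g k (c : R) : 0 < c ->
  lc_nonneg (fun q => c * x q - g q) -> (forall p, p < k -> g p = 0) -> 0 < g k ->
  lc_pos (fun q => x q - monom k (g k / 2 / c) q).
Proof.
move=> c0 cxg g_lead gk; have c_inv : 0 < c^-1 by rewrite invr_gt0.
have := lc_posZ c_inv (lc_pos_nonnegD (lc_pos_sub_half_lead g_lead gk) cxg).
apply: lc_pos_eq => q; rewrite /monom; case: (q == k); field; exact: lt0r_neq0.
Qed.

Lemma window_inside y z k (rho r : R) :
  lc_pos (fun q => z q - y q - monom k rho q) -> 0 < r < rho ->
  lc_pos (fun q => y q + monom k r q - monom (k + 1) 1 q - y q) /\
  lc_pos (fun q => z q - (y q + monom k r q + monom (k + 1) 1 q)).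
Proof.
move=> long_gap /andP[r0 r_rho]; have kk1 : k < k + 1 by rewrite ltrDl.
split; first by apply: lc_pos_eq (lc_pos_monom_sub 1 kk1 r0); lc_ring.
have rho_r : 0 < rho - r by rewrite subr_gt0.
apply: lc_pos_eq (lc_posD long_gap (lc_pos_monom_sub 1 kk1 rho_r)) => q.
by rewrite -monomB; ring.
Qed.

Lemma windows_apart k (r r' : R) : r < r' ->
  lc_pos (fun q => monom k r' q - monom k r q - 3 * monom (k + 1) 1 q).
Proof.
move=> rr'; have kk1 : k < k + 1 by rewrite ltrDl.
apply: lc_pos_eq (lc_pos_monom_sub 3 kk1 (_ : 0 < r' - r)); last by rewrite subr_gt0.
by move=> q; rewrite monomB monomZ mulr1.
Qed.

Lemma dense_gap_not_finely_covered (I : lc_interval R) X (S : nat -> lc_interval R)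
    y z k (rho : R) :
  lc_dense_in X I -> LC y ->
  lc_nonneg (fun q => y q - ia I q) -> lc_nonneg (fun q => ib I q - z q) ->
  0 < rho -> lc_pos (fun q => z q - y q - monom k rho q) ->
  (forall x, X x -> lc_lt y x -> lc_lt x z ->
     exists2 n, Defs.in_itv (S n) x & lc_lt (itv_length (S n)) (monom (k + 1) 1)) ->
  False.
Proof.
move=> dense ly ya zb rho0 long_gap fine.
have e_pos : lc_pos (monom (k + 1) (1 : R)) by exact: lc_pos_monom.
have pick r : exists n, 0 < r < rho -> exists2 x,
    lc_lt (fun q => y q + monom k r q - monom (k + 1) 1 q) x /\
    lc_lt x (fun q => y q + monom k r q + monom (k + 1) 1 q) &
    Defs.in_itv (S n) x /\ lc_lt (itv_length (S n)) (monom (k + 1) 1).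
  case: (boolP (0 < r < rho)) => [r_itv|_]; last by exists 0%N.
  have [ye ez] := window_inside long_gap r_itv.
  have lp : LC (fun q => y q + monom k r q) := LC_add ly (LC_monom k r).
  have Ip : Defs.in_itv I (fun q => y q + monom k r q).
    apply: in_itv_strict lp _ _.
      by apply: lc_pos_eq (lc_pos_nonnegD (lc_posD ye e_pos) ya); lc_ring.
    by apply: lc_pos_eq (lc_pos_nonnegD (lc_posD ez e_pos) zb); lc_ring.
  have [||x [Xx ex xe]] := dense_meets_between dense
    (LC_sub lp (LC_monom (k + 1) 1)) (LC_add lp (LC_monom (k + 1) 1)) Ip.
  - by apply: lc_pos_eq e_pos; lc_ring.
  - by apply: lc_pos_eq e_pos; lc_ring.
  have [||n Sx short] := fine x Xx.
  - by apply: lc_pos_eq (lc_posD ex ye); lc_ring.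
  - by apply: lc_pos_eq (lc_posD xe ez); lc_ring.
  by exists n => _; exists x.
have [f hf] := choice pick.
have apart r r' : 0 < r < rho -> 0 < r' < rho -> r < r' -> f r = f r' -> False.
  move=> hr hr' rr' frr'.
  have [x [_ xr] [Sx short]] := hf r hr; have [x' [rx' _] [Sx' _]] := hf r' hr'.
  rewrite -frr' in Sx'; have [ax _] := in_itv_bounds Sx; have [_ xb] := in_itv_bounds Sx'.
  apply: (not_lc_pos0 _ (lc_pos_nonnegD (lc_pos_nonnegD (lc_posD (lc_posD (lc_posD
    rx' xr) (windows_apart k rr')) short) ax) xb)); lc_ring.
apply: (no_nat_injection_on_itv (f := f) rho0) => r r'; rewrite !in_setE /= => hr hr' frr'.
by case: (ltgtP r r') => // [rr'|r'r]; [case: (apart r r')|case: (apart r' r)].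
Qed.

End DenseGap.

Section OuterMeasure.
Variable R : realType.

Lemma cover_sum_ge_length (I : lc_interval R) X S L :
  is_interval I -> lc_dense_in X I -> is_cover X S ->
  lc_series_to (fun n => itv_length (S n)) L -> lc_le (itv_length I) L.
Proof.
move=> [la lb ab] dense [Sint Scov _] sumL.
have lS n : LC (ia (S n)) /\ LC (ib (S n)) by case: (Sint n).
have lenS n : LC (itv_length (S n)) by apply: LC_sub; case: (Sint n).
have lenS_pos n : lc_pos (itv_length (S n)) by case: (Sint n).
have lL : LC L by case: sumL.
apply: lc_nonneg_le; case: (lc_le_or_gt (LC_sub lb la) lL) => // short; exfalso.
pose g q := ib I q - ia I q - L q; have [k [gk g_lead]] : lc_pos g := short.
have [N0 tail_small] := lc_series_terms_small (k + 1) sumL lenS.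
have partial := lc_psum_le_lim N0 sumL lenS (fun n => lc_pos_nonneg (lenS_pos n)).
have [y [z [ly ya zb miss [c c0 cg]]]] :
    has_free_gap N0 (fun n => ia (S n)) (fun n => ib (S n)) (ia I) (ib I) g.
  apply: (free_gap_exists lS la lb short); apply: lc_nonneg_eq partial => q.
  rewrite (eq_bigr (fun n : 'I_N0 => itv_length (S n) q)) /g /lc_psum; first ring.
  by move=> n _; rewrite seg_length_itv.
have long_gap := lc_pos_sub_lead_monom c0 cg g_lead gk.
apply: (dense_gap_not_finely_covered (S := S) dense ly ya zb _ long_gap).
  by rewrite !divr_gt0.
move=> x Xx yx xz; have [n Sx] := Scov x Xx; exists n => //.
have [ax xb] := in_itv_bounds Sx.
case: (leqP N0 n) => [/tail_small small|nN].
  by apply: lc_pos_eq small; lc_ring.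
by case: (miss n x nN yx xz ax xb).
Qed.

Definition shrinking_cover (I : lc_interval R) (v : rat) (n : nat) : lc_interval R :=
  if n is _.+1 then
    Itv (ia I) (fun q => ia I q + monom (v + n%:R) 1 q - monom (v + n.+1%:R) 1 q) true true
  else I.

Lemma shrinking_cover_interval I v n : is_interval I -> is_interval (shrinking_cover I v n).
Proof.
case: n => [//|n] [la lb ab]; split=> //=.
  by apply: LC_sub; [apply: LC_add la _|]; apply: LC_monom.
have vn : v + n.+1%:R < v + n.+2%:R by rewrite ltrD2l ltr_nat.
by apply: lc_pos_eq (lc_pos_monom_sub 1 vn ltr01); lc_ring.
Qed.

Lemma shrinking_cover_series I v : is_interval I ->
  lc_series_to (fun n => itv_length (shrinking_cover I v n))
               (fun q => itv_length I q + monom (v + 1) 1 q).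
Proof.
case=> la lb _; apply: (lc_cvg_sub_monom (v := v)).
  exact: LC_add (LC_sub lb la) (LC_monom _ _).
case=> // n _; elim: n => [|n IH] q; rewrite lc_psumS.
  by rewrite /lc_psum big_ord0 /=; ring.
by rewrite IH /=; unfold itv_length, lc_sub, lc_add, lc_opp; simpl; ring.
Qed.

Lemma length_is_outer_measure (I : lc_interval R) X :
  is_interval I -> lc_dense_in X I -> outer_measure_is X (itv_length I).
Proof.
move=> hI hX; have [la lb _] := hI.
split; first exact: LC_sub.
  by move=> L [S [cov sumL]]; exact: cover_sum_ge_length hI hX cov sumL.
move=> m lm lower; apply: lc_nonneg_le.
case: (lc_le_or_gt lm (LC_sub lb la)) => // big; exfalso; have [v [mv m_lead]] := big.
have cov : cover_sums X (fun q => itv_length I q + monom (v + 1) 1 q).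
  exists (shrinking_cover I v); split; last exact: shrinking_cover_series.
  split; [|by move=> x Xx; exists 0%N; exact: hX.1|].
    by move=> n; exact: shrinking_cover_interval.
  by exists (fun q => itv_length I q + monom (v + 1) 1 q); exact: shrinking_cover_series.
have vv1 : v < v + 1 by rewrite ltrDl.
have := lc_pos_nonnegD (lc_pos_sub_monom 1 m_lead mv vv1) (lc_le_nonneg (lower _ cov)).
by apply: not_lc_pos0; lc_ring.
Qed.

End OuterMeasure.

Theorem mainTheorem11 (R : realType) (I : lc_interval R) (X : set (rat -> R)) :
  is_interval I -> lc_dense_in X I ->
  (forall (S : nat -> lc_interval R) (L : rat -> R),
      is_cover X S -> lc_series_to (fun n => itv_length (S n)) L ->
      lc_le (itv_length I) L) /\
  outer_measurable X /\ outer_measure_is X (itv_length I).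
Proof.
move=> hI hX; have inf := length_is_outer_measure hI hX.
split; first by move=> S L; exact: cover_sum_ge_length.
by split=> //; exists (itv_length I).
Qed.
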